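(* Let $r_n$ be the number of recursively labelled red and white trees with $n$ labels, and $F(x)=\sum_{n\ge1}r_nx^n$. Then $F=x+2xF+2F^2$. (The first values are $1,4,24,176,1440,\dots$.)
   Context: A labelled red and white tree with $n$ labels is a finite rooted tree (children unordered) in which each node $z$ carries a possibly empty label set $L(z)\subseteq[n]$, the sets $L(z)$ partitioning $[n]$, and every node with empty label set has at least two children; colours (red/white) are determined by these data (a labelled node is white, an empty node is red iff all its children are white) and do not affect counting. It is recursively labelled if for every node $z$ the union of the label sets of the nodes of the subtree rooted at $z$ is an interval of consecutive integers. *)

From Stdlib Require List.
From Stdlib Require Import Permutation.
From mathcomp Require Import all_boot.

Set Implicit Arguments.
Unset Strict Implicit.
Unset Printing Implicit Defensive.

(* A finite rooted tree with unordered children: a node carries its label set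
   L(z) (as a sequence of naturals) and the list of its children; the order of
   the children (and of the labels inside a node) is irrelevant, which is taken
   into account by the isomorphism relation [rw_iso] below.  Colours are
   determined by the data and do not affect counting, so they are omitted. *)
Inductive rwtree : Type :=
  RWNode : seq nat -> seq rwtree -> rwtree.

Fixpoint rw_labels (t : rwtree) : seq nat :=
  match t with
  | RWNode L ch => L ++ flatten (map rw_labels ch)
  end.

Fixpoint rw_all_nodes (P : seq nat -> seq rwtree -> bool) (t : rwtree) : bool :=
  match t with
  | RWNode L ch => P L ch && all (rw_all_nodes P) ch
  end.

Definition rw_tree_n (n : nat) (t : rwtree) : bool :=
  perm_eq (rw_labels t) (iota 1 n) &&
  rw_all_nodes (fun L ch => (L == [::]) ==> (2 <= size ch)) t.

Definition is_interval (s : seq nat) : Prop :=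
  exists a, perm_eq s (iota a (size s)).

Fixpoint rw_all_subtrees (P : rwtree -> Prop) (t : rwtree) : Prop :=
  match t with
  | RWNode L ch => P t /\ (fix aux (l : seq rwtree) : Prop :=
                             match l with
                             | [::] => True
                             | c :: l' => rw_all_subtrees P c /\ aux l'
                             end) ch
  end.

Definition recursively_labelled (t : rwtree) : Prop :=
  rw_all_subtrees (fun s => is_interval (rw_labels s)) t.

Definition rl_tree (n : nat) (t : rwtree) : Prop :=
  rw_tree_n n t /\ recursively_labelled t.

Inductive rw_iso : rwtree -> rwtree -> Prop :=
| rw_iso_node (L1 L2 : seq nat) (c1 c2 c2' : seq rwtree) :
    perm_eq L1 L2 -> Permutation c2 c2' -> List.Forall2 rw_iso c1 c2' ->
    rw_iso (RWNode L1 c1) (RWNode L2 c2).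

(* [num_rl_trees n k]: there are exactly k recursively labelled red and white
   trees with n labels (up to isomorphism), i.e. there is a list of k pairwise
   non-isomorphic such trees such that every such tree is isomorphic to one
   of them. *)
Definition num_rl_trees (n k : nat) : Prop :=
  exists s : seq rwtree,
    size s = k /\
    (forall t, List.In t s -> rl_tree n t) /\
    (forall t, rl_tree n t -> exists2 t', List.In t' s & rw_iso t t') /\
    (forall (d : rwtree) i j, i < j -> j < k -> ~ rw_iso (nth d s i) (nth d s j)).

(* A tree with labels [a, a + n) is described by the content (label list and
   children) of its root.  The minimum label [a] lies either in the root, or
   in a unique child whose labels then form an initial segment [a, a + k)
   (recursive labelling).  Removing [a], resp. that child, leaves a "rest" on
   the remaining interval: it is empty, a valid node content, or an unlabelled
   content with a single child (2 r_m + [m = 0] choices on m labels).  Hence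
   r_{n+1} = [n = 0] + 2 r_n + 2 sum_{k=1}^{n} r_k r_{n+1-k}. *)

From Stdlib Require List.
From Stdlib Require Import Permutation.
From HB Require Import structures.
From mathcomp Require Import all_boot zify.

Set Implicit Arguments.
Unset Strict Implicit.
Unset Printing Implicit Defensive.

Definition rwtree_nested_ind (Q : rwtree -> Prop)
    (IH : forall L ch, List.Forall Q ch -> Q (RWNode L ch)) : forall t, Q t :=
  fix tree_ind t := match t with RWNode L ch => IH L ch
    ((fix forest_ind l := match l return List.Forall Q l with
      | [::] => List.Forall_nil _
      | c :: l' => List.Forall_cons _ (tree_ind c) (forest_ind l') end) ch) end.

Fixpoint rw_encode (t : rwtree) : GenTree.tree (seq nat) :=
  let: RWNode L ch := t in GenTree.Node 0 (GenTree.Leaf L :: map rw_encode ch).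

Fixpoint rw_decode (t : GenTree.tree (seq nat)) : option rwtree :=
  if t is GenTree.Node _ (GenTree.Leaf L :: ts)
  then Some (RWNode L (pmap rw_decode ts)) else None.

Lemma rw_encodeK : pcancel rw_encode rw_decode.
Proof.
elim/rwtree_nested_ind => L ch IH /=; congr (Some (RWNode L _)).
by elim: IH => //= c {}ch -> _ ->.
Qed.

HB.instance Definition _ := Countable.copy rwtree (pcan_type rw_encodeK).

Lemma InP (T : eqType) (x : T) (s : seq T) : reflect (List.In x s) (x \in s).
Proof.
elim: s => [|y s IH] /=; first by constructor.
by rewrite inE; apply: (iffP orP) => [[/eqP|/IH]|[->|/IH]]; auto; rewrite eqxx; left.
Qed.

Lemma PermutationP (T : eqType) (s t : seq T) : reflect (Permutation s t) (perm_eq s t).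
Proof.
apply: (iffP idP); last first.
  elim=> [|x s1 s2 _ IH|x y s1|s1 s2 s3 _ IH1 _ IH2] //.
  - by rewrite perm_cons.
  - by rewrite (perm_catCA [:: y] [:: x] s1).
  - exact: perm_trans IH1 IH2.
elim: s t => [|x s IH] t Hst; first by move: Hst; rewrite perm_sym => /perm_nilP ->.
have Hx : x \in t by rewrite -(perm_mem Hst) mem_head.
move: Hst; case/splitPr: Hx => t1 t2.
rewrite perm_sym -[x :: t2]cat1s perm_catCA perm_sym perm_cons => /IH.
exact: Permutation_cons_app.
Qed.

Lemma all_Forall (T : Type) (p : pred T) (s : seq T) : all p s <-> List.Forall p s.
Proof.
elim: s => [|x s IH] /=; first by split.
rewrite List.Forall_cons_iff -IH; by split => [/andP|/andP].
Qed.

Lemma rw_all_subtrees_node (Q : rwtree -> Prop) L ch :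
  rw_all_subtrees Q (RWNode L ch) <->
  Q (RWNode L ch) /\ List.Forall (rw_all_subtrees Q) ch.
Proof.
rewrite /=; split=> -[QL Qch]; split=> //; elim: ch Qch {QL} => [|c ch IH] //=.
- by case=> Qc /IH; constructor.
- by move=> /List.Forall_cons_iff [Qc /IH].
Qed.

Notation content := (seq nat * seq rwtree)%type.

Definition mk_node (p : content) : rwtree := RWNode p.1 p.2.

Definition content_labels (p : content) : seq nat := p.1 ++ flatten (map rw_labels p.2).

Definition branching (L : seq nat) (ch : seq rwtree) : bool := (L == [::]) ==> (2 <= size ch).

Definition good (t : rwtree) : Prop := rw_all_nodes branching t /\ recursively_labelled t.

Lemma good_node L ch : good (RWNode L ch) <->
  [/\ branching L ch, List.Forall good ch & is_interval (rw_labels (RWNode L ch))].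
Proof.
rewrite /good /recursively_labelled; split.
- case=> /andP [br /all_Forall sub] /rw_all_subtrees_node [int rl].
  by split=> //; exact: List.Forall_and sub rl.
- case=> br /List.Forall_and_inv [sub rl] int; split.
  + by rewrite /= br; apply/all_Forall.
  + exact/rw_all_subtrees_node.
Qed.

(* A node whose labels are [a, a + n) is determined (up to isomorphism) by
   where its minimum label [a] sits: either in the root, and the rest of the
   root content carries the labels [a + 1, a + n); or in a child, which then
   carries an interval [a, a + k) with 0 < k < n, and the remaining content
   carries [a + k, a + n).  A "rest" with labels [b, b + m) is either empty
   (m = 0), a valid node content, or an unlabelled content with a single
   child; this explains the two copies of the nodes in [rests]. *)
Definition wrap (q : content) : content := ([::], [:: mk_node q]).

Definition rests (g : nat -> nat -> seq content) (b m : nat) : seq content :=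
  if m is 0 then [:: ([::], [::])] else g b m ++ map wrap (g b m).

Definition graft (q w : content) : content := (w.1, mk_node q :: w.2).

Definition grafts (g : nat -> nat -> seq content) (a n k : nat) : seq content :=
  [seq graft q w | q <- g a k, w <- rests g (a + k) (n - k)].

Definition gen_step (g : nat -> nat -> seq content) (a n : nat) : seq content :=
  if n is n'.+1 then
    [seq (a :: w.1, w.2) | w <- rests g a.+1 n'] ++
    flatten [seq grafts g a n k | k <- iota 1 n']
  else [::].

(* [gen a n] lists one representative of each isomorphism class of good node
   contents with labels [a, a + n); it is the fixed point of [gen_step],
   computed with enough fuel. *)
Fixpoint gen_fuel (f : nat) : nat -> nat -> seq content :=
  if f is f'.+1 then gen_step (gen_fuel f') else fun _ _ => [::].

Definition gen (a n : nat) : seq content := gen_fuel n.+1 a n.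

(* [gen_step g a n] only uses [g] on sizes below [n], so any fuel larger than
   the size gives the same list. *)
Lemma gen_step_ext g1 g2 a n : (forall b m, m < n -> g1 b m = g2 b m) ->
  gen_step g1 a n = gen_step g2 a n.
Proof.
case: n => [|n] //= g12.
have rests12 b m : m <= n -> rests g1 b m = rests g2 b m.
  by case: m => [|m] //= lemn; rewrite g12.
rewrite rests12 //; congr (_ ++ flatten _); apply/eq_in_map => k.
rewrite mem_iota /grafts => /andP [k0 kn]; rewrite g12 ?rests12 //; lia.
Qed.

Lemma gen_fuel_enough f f' a n : n < f -> n < f' -> gen_fuel f a n = gen_fuel f' a n.
Proof.
elim: f f' a n => [|f IH] [|f'] a n //= ltnf ltnf'.
by apply: gen_step_ext => b m ltmn; apply: IH; lia.
Qed.

Lemma gen_eq a n : gen a n = gen_step gen a n.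
Proof.
by apply: gen_step_ext => b m ltmn; apply: gen_fuel_enough; lia.
Qed.

Lemma gen0 a : gen a 0 = [::].
Proof. by rewrite gen_eq. Qed.

Arguments gen : simpl never.

Lemma size_rests b m : size (rests gen b m) = (m == 0) + 2 * size (gen b m).
Proof. by case: m => [|m]; rewrite ?gen0 //= size_cat size_map; lia. Qed.

Lemma size_gen a n : size (gen a n.+1) = size (rests gen a.+1 n) +
  \sum_(1 <= k < n.+1) size (gen a k) * size (rests gen (a + k) (n.+1 - k)).
Proof.
rewrite gen_eq /= size_cat size_map size_flatten /shape -map_comp.
rewrite sumnE big_map /index_iota subn1; congr (_ + _).
by apply: eq_bigr => k _; rewrite /= size_allpairs.
Qed.

Lemma size_gen_shift a b n : size (gen a n) = size (gen b n).
Proof.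
elim/ltn_ind: n a b => -[|n] IH a b; first by rewrite !gen0.
rewrite !size_gen !size_rests (IH n _ a.+1 b.+1) //; congr (_ + _).
apply: eq_big_nat => k /andP [k0 kn].
by rewrite !size_rests (IH k _ a b) ?(IH (n.+1 - k) _ (a + k) (b + k)) //; lia.
Qed.

Definition r (n : nat) : nat := size (gen 1 n).

Lemma r_rec n : r n = (n == 1) + 2 * r n.-1 + 2 * \sum_(i < n.+1) r i * r (n - i).
Proof.
have r0 : r 0 = 0 by rewrite /r gen0.
case: n => [|n]; first by rewrite big_ord1 r0.
rewrite {1}/r size_gen size_rests (size_gen_shift 2 1) -/(r n) addnA; congr (_ + _).
(* the terms i = 0 and i = n + 1 of the convolution vanish *)
rewrite -(big_mkord xpredT (fun i => r i * r (n.+1 - i))).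
rewrite [in RHS]big_ltn // [in RHS]big_nat_recr //=.
rewrite r0 subnn r0 muln0 mul0n add0n addn0 big_distrr.
apply: eq_big_nat => k /andP [k0 kn].
rewrite size_rests (size_gen_shift (1 + k) 1) -/(r k) -/(r (n.+1 - k)).
have -> : (n.+1 - k == 0) = false by apply/eqP; lia.
rewrite /=; lia.
Qed.

Lemma gen_cases a n p : p \in gen a n.+1 ->
  (exists2 w, w \in rests gen a.+1 n & p = (a :: w.1, w.2)) \/
  (exists k q w, [/\ 0 < k <= n, q \in gen a k,
                     w \in rests gen (a + k) (n.+1 - k) & p = graft q w]).
Proof.
rewrite gen_eq /= mem_cat => /orP [/mapP [w Hw ->]|/flatten_mapP [k]]; first by left; exists w.
rewrite mem_iota => kn /allpairsP [[q w] /= [Hq Hw ->]].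
by right; exists k, q, w; split=> //; lia.
Qed.

Lemma labels_wrap q : content_labels (wrap q) = content_labels q.
Proof. by rewrite /content_labels /= cats0. Qed.

Lemma labels_graft q w :
  perm_eq (content_labels (graft q w)) (content_labels q ++ content_labels w).
Proof. by rewrite /content_labels /= perm_catCA. Qed.

Lemma rests_labels g b m w :
  {in g b m, forall p, perm_eq (content_labels p) (iota b m)} ->
  w \in rests g b m -> perm_eq (content_labels w) (iota b m).
Proof.
case: m => [|m] Hg /=; first by rewrite inE => /eqP ->.
by rewrite mem_cat => /orP [/Hg|/mapP [q /Hg Hq ->]]; rewrite ?labels_wrap.
Qed.

Lemma rests_good g b m w : {in g b m, forall p, good (mk_node p)} ->
  w \in rests g b m -> List.Forall good w.2.
Proof.
case: m => [|m] Hg /=; first by rewrite inE => /eqP ->.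
rewrite mem_cat => /orP [/Hg /good_node []|/mapP [q /Hg Hq ->]] //.
by constructor.
Qed.

Lemma gen_labels a n p : p \in gen a n -> perm_eq (content_labels p) (iota a n).
Proof.
elim/ltn_ind: n a p => -[|n] IH a p; first by rewrite gen0.
have IHr m b w : m <= n -> w \in rests gen b m -> perm_eq (content_labels w) (iota b m).
  by move=> lemn; apply: rests_labels => q; apply: IH.
case/gen_cases => [[w Hw ->]|[k [q [w [/andP [k0 kn] Hq Hw ->]]]]].
  by rewrite /content_labels /= perm_cons; apply: IHr Hw.
have -> : iota a n.+1 = iota a k ++ iota (a + k) (n.+1 - k).
  by rewrite -iotaD subnKC // ltnW.
by rewrite (perm_trans (labels_graft q w)) // perm_cat ?(IH k _ a) ?(IHr _ _ w) //; lia.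
Qed.

Lemma rests_gen_labels b m w :
  w \in rests gen b m -> perm_eq (content_labels w) (iota b m).
Proof. by apply: rests_labels => p; apply: gen_labels. Qed.

Lemma rests_labels_ge b m w x :
  w \in rests gen b m -> x \in content_labels w -> b <= x.
Proof. by move=> /rests_gen_labels /perm_mem -> /[!mem_iota] /andP []. Qed.

Lemma gen_branching a n p : p \in gen a n -> branching p.1 p.2.
Proof.
case: n => [|n]; first by rewrite gen0.
case/gen_cases => [[w _ ->]|[k [q [[L ch] [kn _ Hw ->]]]]] //=.
rewrite /branching /=; apply/implyP => /eqP L0; move: Hw; rewrite L0.
case: ch => [|c ch] // /rests_gen_labels /perm_size.
by rewrite /content_labels /= size_iota; lia.
Qed.

Lemma gen_good a n p : p \in gen a n -> good (mk_node p).
Proof.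
elim/ltn_ind: n a p => -[|n] IH a p Hp; first by move: Hp; rewrite gen0.
apply/good_node; split; first exact: gen_branching Hp.
- have IHr m b w : m <= n -> w \in rests gen b m -> List.Forall good w.2.
    by move=> lemn; apply: rests_good => q; apply: IH.
  case/gen_cases: Hp => [[w Hw ->]|[k [q [w [/andP [k0 kn] Hq Hw ->]]]]] /=.
    exact: IHr Hw.
  by constructor; [apply: (IH k _ _ _ Hq) | apply: IHr Hw]; lia.
- by exists a; rewrite (perm_size (gen_labels Hp)) size_iota; apply: gen_labels.
Qed.

Lemma gen_rl_tree n p : p \in gen 1 n -> rl_tree n (mk_node p).
Proof.
move=> Hp; have [nodes_ok rl] := gen_good Hp.
by split=> //; rewrite /rw_tree_n (gen_labels Hp).
Qed.

Lemma graft_inj q w q' w' : graft q w = graft q' w' -> q = q' /\ w = w'.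
Proof. by case: q q' w w' => [? ?] [? ?] [? ?] [? ?] [-> -> -> ->]. Qed.

(* A wrapped node is not branching, hence differs from every node of [g b m]. *)
Lemma rests_uniq g b m : uniq (g b m) -> {in g b m, forall p, branching p.1 p.2} ->
  uniq (rests g b m).
Proof.
case: m => [|m] //= Ug Bg; rewrite cat_uniq Ug map_inj_uniq ?Ug ?andbT; last first.
  by move=> [? ?] [? ?] [-> ->].
by apply/hasPn => _ /mapP [q _ ->]; apply/negP => /Bg.
Qed.

Lemma grafts_first_child a n k p : p \in grafts gen a n k ->
  size (rw_labels (head (RWNode [::] [::]) p.2)) = k.
Proof.
by case/allpairsP => [[q w] /= [/gen_labels /perm_size + _ ->]]; rewrite size_iota.
Qed.

Lemma gen_uniq a n : uniq (gen a n).
Proof.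
elim/ltn_ind: n a => -[|n] IH a; first by rewrite gen0.
have Ur b m : m <= n -> uniq (rests gen b m).
  by move=> lemn; apply: rests_uniq => [|q]; [apply: IH | apply: gen_branching].
rewrite gen_eq /= cat_uniq map_inj_uniq ?Ur //=; last by move=> [? ?] [? ?] /= [-> ->].
apply/andP; split.
- (* [a] is a root label in the first part, a label of a child in the second *)
  apply/hasPn => p /flatten_mapP [k /[!mem_iota] /andP [k0 _]].
  case/allpairsP => [[q w] /= [_ Hw ->]]; apply/negP => /mapP [w' _ [aw _]].
  have /(rests_labels_ge Hw) : a \in content_labels w by rewrite mem_cat aw mem_head.
  lia.
-
  rewrite (_ : flatten _ = [seq p | k <- iota 1 n, p <- grafts gen a n.+1 k]); last first.
    by congr flatten; apply: eq_map => k; rewrite map_id.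
  apply: allpairs_uniq_dep => [|k /[!mem_iota] /andP [k0 kn]|]; first exact: iota_uniq.
    apply: allpairs_uniq => [||[q w] [q' w'] _ _ /graft_inj [-> ->]] //; first by apply: IH; lia.
    by apply: Ur; lia.
  move=> [k1 p1] [k2 p2] /allpairsPdep [k [p [_ Hp [-> ->]]]].
  move=> /allpairsPdep [k' [p' [_ Hp' [-> ->]]]] /= Epp'; subst p'.
  by rewrite -(grafts_first_child Hp) -(grafts_first_child Hp').
Qed.

Definition iso_content (p q : content) : Prop :=
  perm_eq p.1 q.1 /\ exists2 c, Permutation q.2 c & List.Forall2 rw_iso p.2 c.

Lemma iso_node p q : rw_iso (mk_node p) (mk_node q) <-> iso_content p q.
Proof.
split=> [H|[HL [c Hp Hf]]]; last exact: rw_iso_node HL Hp Hf.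
by inversion H; subst; split=> //; exists c2'.
Qed.

Lemma iso_labels t1 t2 : rw_iso t1 t2 -> perm_eq (rw_labels t1) (rw_labels t2).
Proof.
elim/rwtree_nested_ind: t1 t2 => L ch IH t2 H.
inversion H as [L1 L2 c1 c2 c2' HL Hp Hf]; subst => /=.
have c2'c2 : perm_eq (flatten (map rw_labels c2')) (flatten (map rw_labels c2)).
  by rewrite perm_sym; apply/perm_flatten/perm_map/PermutationP.
rewrite perm_cat // (perm_trans _ c2'c2) //.
elim: Hf IH {H Hp c2'c2} => //= x y l l' Hxy _ IHl /List.Forall_cons_iff [IHx /IHl].
exact: perm_cat (IHx y Hxy).
Qed.

Lemma iso_branching p q : iso_content p q -> branching p.1 p.2 = branching q.1 q.2.
Proof.
case=> HL [c Hp Hf]; rewrite /branching.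
have -> : (p.1 == [::]) = (q.1 == [::]) by rewrite -!size_eq0 (perm_size HL).
have -> : size p.2 = size c by exact: List.Forall2_length Hf.
by have -> : size q.2 = size c by exact: Permutation_length Hp.
Qed.

Lemma iso_wrap q q' : iso_content (wrap q) (wrap q') -> rw_iso (mk_node q) (mk_node q').
Proof.
case=> _ [c Hp]; rewrite (Permutation_length_1_inv Hp) => Hf.
by inversion Hf.
Qed.

Lemma rests_canonical g b m w w' :
  {in g b m &, forall p p', iso_content p p' -> p = p'} ->
  {in g b m, forall p, branching p.1 p.2} ->
  w \in rests g b m -> w' \in rests g b m -> iso_content w w' -> w = w'.
Proof.
case: m => [|m] Cg Bg /=; first by rewrite !inE => /eqP -> /eqP ->.
rewrite !mem_cat => /orP [Hw|/mapP [q Hq ->]] /orP [Hw'|/mapP [q' Hq' ->]] Hiso.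
- exact: Cg.
- by move: (Bg _ Hw); rewrite (iso_branching Hiso).
- by move: (Bg _ Hw'); rewrite -(iso_branching Hiso).
- by rewrite (Cg q q') //; apply/iso_node/iso_wrap.
Qed.

Lemma iso_graft x q w q' w' : x \in content_labels q -> x \notin content_labels w' ->
  iso_content (graft q w) (graft q' w') ->
  rw_iso (mk_node q) (mk_node q') /\ iso_content w w'.
Proof.
move=> xq xw' [HL [c Hp Hf]]; inversion Hf as [|? d ? c' Hqd Hwc']; subst.
have xd : x \in rw_labels d by rewrite -(perm_mem (iso_labels Hqd)).
case: (Permutation_in _ (Permutation_sym Hp) (or_introl erefl)) => [Ed|Hd].
- by subst d; split=> //; split=> //; exists c' => //; apply: Permutation_cons_inv Hp.
- case/negP: xw'; rewrite mem_cat; apply/orP; right.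
  by apply/flatten_mapP; exists d => //; apply/InP.
Qed.

Lemma gen_canonical a n p p' : p \in gen a n -> p' \in gen a n -> iso_content p p' -> p = p'.
Proof.
elim/ltn_ind: n a p p' => -[|n] IH a p p'; first by rewrite gen0.
have Cr m b w w' : m <= n -> w \in rests gen b m -> w' \in rests gen b m ->
    iso_content w w' -> w = w'.
  move=> lemn; apply: rests_canonical => [q q' Hq Hq'|q].
  - by apply: (IH m _ b) => //; lia.
  - exact: gen_branching.
(* [a] is a root label in the first kind of contents only *)
have a_rest k w : 0 < k -> w \in rests gen (a + k) (n.+1 - k) -> a \notin content_labels w.
  by move=> k0 Hw; apply/negP => /(rests_labels_ge Hw); lia.
case/gen_cases => [[w Hw ->]|[k [q [w [/andP [k0 kn] Hq Hw ->]]]]];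
case/gen_cases => [[w' Hw' ->]|[k' [q' [w' [/andP [k0' kn'] Hq' Hw' ->]]]]] [HL Hc].
- by rewrite (Cr n a.+1 w w') //; split=> //; rewrite -(perm_cons a).
- by case/negP: (a_rest _ _ k0' Hw'); rewrite mem_cat -(perm_mem HL) mem_head.
- by case/negP: (a_rest _ _ k0 Hw); rewrite mem_cat (perm_mem HL) mem_head.
- have aq : a \in content_labels q by rewrite (perm_mem (gen_labels Hq)) mem_iota; lia.
  have [Hqq' Hww'] := iso_graft aq (a_rest _ _ k0' Hw') (conj HL Hc).
  have kk' : k = k'.
    rewrite -(size_iota a k) -(perm_size (gen_labels Hq)).
    by rewrite (perm_size (iso_labels Hqq')) (perm_size (gen_labels Hq')) size_iota.
  subst k'; have -> : q = q' by apply: (IH k _ a) => //; exact/iso_node.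
  by rewrite (Cr (n.+1 - k) (a + k) w w') //; lia.
Qed.

Lemma good_labels t : good t -> 0 < size (rw_labels t).
Proof.
elim/rwtree_nested_ind: t => L ch IH /good_node [br Hg _] /=.
case: L br => [|x L] //= br.
case: ch br IH Hg => [|c ch] //= _ IH Hg.
by have := List.Forall_inv IH (List.Forall_inv Hg); rewrite size_cat; lia.
Qed.

Lemma interval_from_min s a : is_interval s -> a \in s -> {in s, forall x, a <= x} ->
  perm_eq s (iota a (size s)).
Proof.
move=> [b Hb] a_s ge_a; suff -> : a = b by [].
have := a_s; rewrite (perm_mem Hb) mem_iota => /andP [ba ab].
have : b \in s by rewrite (perm_mem Hb) mem_iota; lia.
by move/ge_a; lia.
Qed.

Lemma min_child_labels L ch c a m :
  perm_eq (content_labels (L, ch)) (iota a m) -> c \in ch -> a \in rw_labels c -> good c ->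
  let k := size (rw_labels c) in
  [/\ 0 < k <= m, perm_eq (rw_labels c) (iota a k)
    & perm_eq (content_labels (L, rem c ch)) (iota (a + k) (m - k))].
Proof.
move=> Hl cch a_c good_c k.
have lab : perm_eq (rw_labels c ++ content_labels (L, rem c ch)) (iota a m).
  rewrite -(permPr Hl) /content_labels /= perm_catCA perm_cat2l.
  by rewrite perm_sym; exact: perm_flatten (perm_map _ (perm_to_rem cch)).
have km : k <= m by rewrite -(size_iota a m) -(perm_size lab) size_cat leq_addr.
have Hc : perm_eq (rw_labels c) (iota a k).
  apply: interval_from_min => //.
    by case: c good_c {a_c cch lab k km} => ? ? /good_node [].
  by move=> x xc; have := perm_mem lab x; rewrite mem_cat xc mem_iota => /esym /andP [].
split=> //; first by rewrite km andbT; apply: leq_trans (good_labels good_c) _.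
by rewrite -(perm_cat2l (iota a k)) -iotaD subnKC // -(perm_catr _ Hc).
Qed.

Lemma rests_cons a m w : w \in rests gen a.+1 m -> (a :: w.1, w.2) \in rests gen a m.+1.
Proof. by move=> Hw; rewrite /= mem_cat gen_eq /= mem_cat map_f. Qed.

Lemma rests_graft a m k q w : 0 < k <= m -> q \in gen a k ->
  w \in rests gen (a + k) (m - k) -> graft q w \in rests gen a m.
Proof.
case: m => [|m] /andP [k0 km] Hq Hw; first by lia.
rewrite /= mem_cat; have [ltkm|lekm] := ltnP k m.+1.
- rewrite gen_eq /= mem_cat; apply/orP; left; apply/orP; right.
  apply/flatten_mapP; exists k; first by rewrite mem_iota; lia.
  exact: allpairs_f.
- have Ek : k = m.+1 by lia.
  subst k; move: Hw; rewrite subnn inE => /eqP ->.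
  by apply/orP; right; apply: map_f.
Qed.

Lemma rests_node a k L ch w : branching L ch -> w \in rests gen a k ->
  iso_content (L, ch) w -> exists2 q, q \in gen a k & rw_iso (RWNode L ch) (mk_node q).
Proof.
case: k => [|k] br /=; first by rewrite inE => /eqP -> /iso_branching; rewrite /= br.
rewrite mem_cat => /orP [Hw|/mapP [q _ ->]] Hiso.
  by exists w => //; exact/(iso_node (L, ch)).
by move: br; rewrite (iso_branching Hiso).
Qed.

(* Number of nodes and labels, the measure for the completeness induction. *)
Fixpoint tree_size (t : rwtree) : nat :=
  let: RWNode L ch := t in (size L + sumn (map tree_size ch)).+1.

Definition content_size (p : content) : nat := size p.1 + sumn (map tree_size p.2).

Lemma content_size_rem L ch c : c \in ch ->
  content_size (L, ch) = tree_size c + content_size (L, rem c ch).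
Proof.
move=> /perm_to_rem /(perm_map tree_size) /perm_sumn.
by rewrite /content_size /= => ->; lia.
Qed.

Lemma iso_content_graft L ch c q w : c \in ch -> rw_iso c (mk_node q) ->
  iso_content (L, rem c ch) w -> iso_content (L, ch) (graft q w).
Proof.
move=> cch cq [HL [d Hp Hf]]; split=> //=.
have /PermutationP ch_c : perm_eq ch (c :: rem c ch) by apply: perm_to_rem.
have [d' [Hd' Hfd']] :=
  Permutation_Forall2 (Permutation_sym ch_c) (List.Forall2_cons _ _ cq Hf).
by exists d' => //; apply: Permutation_trans (perm_skip _ Hp) Hd'.
Qed.

(* Completeness for contents: every content with labels [a, a + m) and good
   children is isomorphic to a generated rest.  By induction on its size: the
   minimum label [a] is either a root label, or lies in a child carrying
   [a, a + k); both the child and the remaining content are smaller. *)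
Lemma rests_complete p a m : perm_eq (content_labels p) (iota a m) ->
  List.Forall good p.2 -> exists2 w, w \in rests gen a m & iso_content p w.
Proof.
have [N ltpN] := ubnP (content_size p).
elim: N => // N IH in p a m ltpN *; case: p ltpN => L ch ltpN Hl /= Hg.
case: m Hl => [|m] Hl.
  exists ([::], [::]); first exact: mem_head.
  move/perm_nilP: Hl; case: L ch Hg {ltpN} => [|x L] [|c ch] //= Hg.
    by split=> //; exists [::].
  by move: (good_labels (List.Forall_inv Hg)); rewrite /content_labels /=; case: (rw_labels c).
have a_in : a \in content_labels (L, ch) by rewrite (perm_mem Hl) mem_iota; lia.
have [aL|aL] := boolP (a \in L).
-
  have [w Hw [HL Hc]] : exists2 w, w \in rests gen a.+1 m & iso_content (rem a L, ch) w.
    apply: IH => //.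
      by move: ltpN; rewrite /content_size /= size_rem //; case: (L) aL => //= *; lia.
    rewrite -(perm_cons a) -(permPr Hl) /content_labels /= -cat_cons.
    by rewrite -(perm_catr _ (perm_to_rem aL)).
  exists (a :: w.1, w.2); first exact: rests_cons.
  by split=> //=; rewrite (permPl (perm_to_rem aL)) perm_cons.
-
  move: a_in; rewrite mem_cat (negbTE aL) => /flatten_mapP [c cch a_c].
  have good_c : good c by move/List.Forall_forall: Hg; apply; apply/InP.
  have [/andP [k0 km] Hc Hrest] := min_child_labels Hl cch a_c good_c.
  have Hsize := content_size_rem L cch.
  case: c good_c Hsize cch a_c k0 km Hc Hrest => Lc chc /good_node [br good_chc _] Hsize cch.
  set k := size _ => a_c k0 km Hc Hrest.
  have [wc Hwc iso_c] : exists2 wc, wc \in rests gen a k & iso_content (Lc, chc) wc.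
    by apply: IH => //; move: ltpN; rewrite Hsize /content_size /=; lia.
  have [q Hq cq] := rests_node br Hwc iso_c.
  have [w Hw iso_w] : exists2 w, w \in rests gen (a + k) (m.+1 - k) &
      iso_content (L, rem (RWNode Lc chc) ch) w.
    apply: IH => //; last first.
      by apply/List.Forall_forall => x /InP /mem_rem /InP; move/List.Forall_forall: Hg; apply.
    by move: ltpN; rewrite Hsize /content_size /=; lia.
  exists (graft q w).
    by apply: rests_graft Hq Hw; apply/andP; split; [exact: k0 | exact: km].
  exact: iso_content_graft cch cq iso_w.
Qed.

Lemma gen_complete t a n : good t -> perm_eq (rw_labels t) (iota a n) ->
  exists2 q, q \in gen a n & rw_iso t (mk_node q).
Proof.
case: t => L ch /good_node [br Hg _] Hl.
have [w Hw Hiso] := @rests_complete (L, ch) a n Hl Hg.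
exact: rests_node br Hw Hiso.
Qed.

Theorem mainTheorem7 :
  exists r : nat -> nat,
    r 0 = 0 /\
    (forall n, 1 <= n -> num_rl_trees n (r n)) /\
    (forall n, r n = (n == 1) + 2 * r n.-1 + 2 * \sum_(i < n.+1) r i * r (n - i)).
Proof.
exists r; split; first by rewrite /r gen0.
split; last exact: r_rec.
move=> n _; exists (map mk_node (gen 1 n)); split; first by rewrite size_map.
split; [|split].
- by move=> t /InP /mapP [p Hp ->]; apply: gen_rl_tree.
- move=> t [/andP [Hl Hb] rl].
  have [q Hq Hiso] := gen_complete (conj Hb rl) Hl.
  by exists (mk_node q) => //; apply/InP/map_f.
- (* distinct entries of a duplicate-free list of canonical nodes are not isomorphic *)
  move=> d i j ltij ltjn; have ltin := ltn_trans ltij ltjn.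
  rewrite !(nth_map ([::], [::])) // => /iso_node.
  move=> /(gen_canonical (mem_nth _ ltin) (mem_nth _ ltjn)) /eqP.
  by rewrite nth_uniq ?gen_uniq // => /eqP Eij; move: ltij; rewrite Eij ltnn.
Qed.
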